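(* Let $k,t\ge1$ be integers and let $D$ be a digraph with $\mathrm{dtw}(D)<k$. Then either $D$ contains $t$ pairwise vertex-disjoint even dicycles, or there exists a set $A\subseteq V(D)$ with $|A|\le k(t-1)$ such that $D-A$ contains no even dicycle.
   Context: A dicycle is even if it has an even number of edges. An arborescence is a rooted tree with all edges oriented away from the root; $T_t$ denotes the subarborescence rooted at $t$. $Y$ strongly guards $X$ (for $X,Y\subseteq V(D)$) if every directed walk starting and ending in $X$ and containing a vertex outside $X$ contains a vertex of $Y$. A directed tree decomposition of $D$ is $(T,\beta,\gamma)$ with $T$ an arborescence, $\beta\colon V(T)\to2^{V(D)}$ such that the nonempty bags $\beta(t)$ partition $V(D)$, and $\gamma\colon E(T)\to 2^{V(D)}$ such that for each $(d,t)\in E(T)$, $\gamma(d,t)$ strongly guards $\bigcup_{t'\in V(T_t)}\beta(t')$. With $\Gamma(t):=\beta(t)\cup\bigcup_{e\text{ incident with }t}\gamma(e)$, the width is $\max_t|\Gamma(t)|-1$, and the directed treewidth $\mathrm{dtw}(D)$ is the minimum width of a directed tree decomposition of $D$. *)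

(* A digraph D is a finite type V of vertices with an edge
   relation E : rel V (loops / antiparallel edges allowed; parallel edges are
   irrelevant for all notions below). *)
From mathcomp Require Import all_boot.
Set Implicit Arguments. Unset Strict Implicit. Unset Printing Implicit Defensive.

Section Digraphs.
Variable V : finType.
Variable E : rel V.

(* A dicycle: a nonempty duplicate-free vertex sequence v0 ... v_{n-1} with
   edges v_i -> v_{i+1} and v_{n-1} -> v0.  Its number of edges is size s. *)
Definition dicycle (s : seq V) : Prop := [/\ s != [::], uniq s & cycle E s].

Definition even_dicycle (s : seq V) : Prop := dicycle s /\ ~~ odd (size s).

Definition del_rel (A : {set V}) : rel V :=
  fun u v => [&& E u v, u \notin A & v \notin A].

Definition strongly_guards (Y X : {set V}) : Prop :=
  forall (x : V) (p : seq V), path E x p ->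
    x \in X -> last x p \in X -> has (fun v => v \notin X) (x :: p) ->
    has (fun v => v \in Y) (x :: p).
End Digraphs.

Definition arborescence (VT : finType) (ET : rel VT) (r : VT) : Prop :=
  [/\ forall d, ~~ ET d r,
      forall t, t != r -> #|[set d | ET d t]| = 1
    & forall t, connect ET r t].

Definition subarb (VT : finType) (ET : rel VT) (t : VT) : {set VT} :=
  [set t' | connect ET t t'].

Definition is_dtd (V : finType) (E : rel V) (VT : finType) (ET : rel VT)
  (r : VT) (beta : VT -> {set V}) (gamma : VT -> VT -> {set V}) : Prop :=
  [/\ arborescence ET r,
      (forall v : V, exists! t : VT, v \in beta t)
    & forall d t, ET d t ->
        strongly_guards E (gamma d t) (\bigcup_(t' in subarb ET t) beta t')].

Definition Gamma (V : finType) (VT : finType) (ET : rel VT)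
  (beta : VT -> {set V}) (gamma : VT -> VT -> {set V}) (t : VT) : {set V} :=
  beta t :|: (\bigcup_(d | ET d t) gamma d t) :|: (\bigcup_(c | ET t c) gamma t c).

Definition dtd_width (V : finType) (VT : finType) (ET : rel VT)
  (beta : VT -> {set V}) (gamma : VT -> VT -> {set V}) : nat :=
  (\max_(t : VT) #|Gamma ET beta gamma t|) - 1.

(* dtw(D) < k, i.e. (dtw being a minimum) some directed tree decomposition
   of D has width < k. *)
Definition dtw_lt (V : finType) (E : rel V) (k : nat) : Prop :=
  exists (VT : finType) (ET : rel VT) (r : VT) (beta : VT -> {set V})
         (gamma : VT -> VT -> {set V}),
    is_dtd E ET r beta gamma /\ dtd_width ET beta gamma < k.

(* The argument works for any class F of dicycles.  In a directed tree decomposition of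
   width < k, pick a deepest node u whose subtree bags still contain a dicycle of F.  Its
   set Gamma(u), of size at most k, separates: every F-dicycle avoiding Gamma(u) is disjoint
   from the subtree bags of u, since otherwise the guard of an edge below u would trap it
   deeper in the tree.  Keep one dicycle inside, recurse with t - 1 on the F-dicycles
   avoiding the subtree bags, and add Gamma(u) to the resulting hitting set. *)
From mathcomp Require Import all_boot.
From mathcomp Require Import zify.
From Stdlib Require Import Classical.
Set Implicit Arguments. Unset Strict Implicit. Unset Printing Implicit Defensive.

Lemma connect_first (T : finType) (e : rel T) u v :
  connect e u v -> u != v -> exists2 c, e u c & connect e c v.
Proof.
move/connectP=> [[|c p] /= p_path ->]; first by rewrite eqxx.
by move: p_path => /andP[euc cp] _; exists c => //; apply/connectP; exists p.
Qed.

Lemma connect_last (T : finType) (e : rel T) u v :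
  connect e u v -> u = v \/ exists2 w, connect e u w & e w v.
Proof.
move/connectP=> [p + ->]; case/lastP: p => [|q w]; first by left.
rewrite rcons_path last_rcons => /andP[q_path ew]; right.
by exists (last u q) => //; apply/connectP; exists q.
Qed.

Section Arborescence.
Variables (VT : finType) (ET : rel VT) (r : VT).
Hypothesis arbT : arborescence ET r.

Lemma arb_parent_unique a b x : ET a x -> ET b x -> a = b.
Proof.
case: arbT => root_in parent _ eax ebx.
have xr : x != r by apply: contraTneq eax => ->; exact: root_in.
have /eqP/cards1P[p Hp] := parent x xr.
have : a \in [set d | ET d x] by rewrite inE.
have : b \in [set d | ET d x] by rewrite inE.
by rewrite Hp !inE => /eqP-> /eqP->.
Qed.

Definition on_cycle x := exists2 y, ET x y & connect ET y x.

(* Along a cycle the in-edge of [x] comes from its unique parent. *)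
Lemma on_cycle_parent x z : on_cycle x -> ET z x -> on_cycle z.
Proof.
move=> [y exy cyx] ezx; exists x => //.
case: (connect_last cyx) => [yx | [w cyw ewx]].
  by move: exy; rewrite yx => /(arb_parent_unique ezx) ->.
rewrite (arb_parent_unique ezx ewx).
exact: connect_trans (connect1 exy) cyw.
Qed.

Lemma arb_acyclic u w : ET u w -> ~~ connect ET w u.
Proof.
move=> euw; apply/negP => cwu.
case: (arbT) => root_in _ /(_ u) /connectP[p p_path u_eq].
suff : ~ on_cycle (last r p) by rewrite -u_eq; apply; exists w.
elim/last_ind: p p_path {u_eq} => [_ [y ery /connect_last[yr|[v _ evr]]] | q x IH].
- by move: ery; rewrite yr (negbTE (root_in r)).
- by rewrite (negbTE (root_in v)) in evr.
- rewrite rcons_path last_rcons => /andP[q_path eqx] x_cyc.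
  exact: IH q_path (on_cycle_parent x_cyc eqx).
Qed.

Lemma subarb_child_proper u c : ET u c -> subarb ET c \proper subarb ET u.
Proof.
move=> euc; apply/properP; split.
  by apply/subsetP => v; rewrite !inE; apply: connect_trans (connect1 euc).
by exists u; rewrite !inE ?connect0 ?arb_acyclic.
Qed.

Lemma exists_deepest (P : VT -> Prop) u0 :
  P u0 -> exists2 u, P u & forall c, ET u c -> ~ P c.
Proof.
suff deepest_below n u : #|subarb ET u| <= n -> P u ->
    exists2 u, P u & forall c, ET u c -> ~ P c by exact: deepest_below.
elim: n u => [|n IHn] u size_u Pu.
  by move: size_u; rewrite leqn0 => /eqP/card0_eq/(_ u); rewrite inE connect0.
have [[c euc Pc] | no_child] := classic (exists2 c, ET u c & P c).
  apply: IHn Pc; rewrite -ltnS; apply: leq_trans size_u.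
  exact/proper_card/subarb_child_proper.
by exists u => // c euc Pc; apply: no_child; exists c.
Qed.
End Arborescence.

Section Dicycles.
Variables (V : finType) (E : rel V).

Lemma dicycle_closed_walk s x : dicycle E s -> x \in s ->
  exists p, [/\ path E x p, last x p = x & x :: p =i s].
Proof.
move=> [_ _ s_cycle] /rot_to[i s' s_rot].
have : cycle E (x :: s') by rewrite -s_rot rot_cycle.
rewrite /= => x_path; exists (rcons s' x); split; rewrite ?last_rcons //.
by move=> y; rewrite -(mem_rot i s) s_rot !inE mem_rcons inE orbA orbb.
Qed.

(* Read the dicycle as a closed walk from [x], which the guard definition applies to. *)
Lemma strongly_guards_dicycle (Y X : {set V}) s x :
  strongly_guards E Y X -> dicycle E s -> [disjoint s & Y] ->
  x \in s -> x \in X -> {subset s <= X}.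
Proof.
move=> guard s_cyc sY xs xX y ys; apply/negPn/negP => yX.
have [p [x_path p_last p_s]] := dicycle_closed_walk s_cyc xs.
move: sY; rewrite disjoint_has -(eq_has_r p_s) => /negP; apply.
apply: (guard x p x_path xX); first by rewrite p_last.
by apply/hasP; exists y; rewrite ?p_s.
Qed.

Lemma even_dicycle_del_rel (A : {set V}) s :
  even_dicycle (del_rel E A) s -> even_dicycle E s /\ [disjoint s & A].
Proof.
move=> [[s_ne s_uniq s_cycle] s_even]; split.
  by split=> //; split=> //; apply: sub_cycle s_cycle => x y /andP[].
rewrite disjoint_has; apply/hasPn => x xs.
by have /and3P[] := next_cycle s_cycle xs.
Qed.
End Dicycles.

Lemma extend_disjoint_family (T : finType) (P : seq T -> Prop) t
    (C : 'I_t -> seq T) c :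
  (forall i, P (C i)) -> (forall i j, i != j -> [disjoint C i & C j]) ->
  P c -> (forall i, [disjoint C i & c]) ->
  exists C' : 'I_t.+1 -> seq T,
    (forall i, P (C' i)) /\ (forall i j, i != j -> [disjoint C' i & C' j]).
Proof.
move=> PC C_disj Pc C_c; exists (fun i => oapp C c (unlift ord_max i)).
split=> [i | i j]; first by case: (unliftP ord_max i) => [i' _|_] //=; apply: PC.
case: (unliftP ord_max i) => [i' -> | ->]; case: (unliftP ord_max j) => [j' -> | ->] //=.
- by move=> ne; apply: C_disj; apply: contraNneq ne => ->.
- by move=> _; rewrite disjoint_sym; apply: C_c.
- by rewrite eqxx.
Qed.

Section TreeDecomposition.
Variables (V : finType) (E : rel V) (k : nat).
Variables (VT : finType) (ET : rel VT) (r : VT).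
Variables (beta : VT -> {set V}) (gamma : VT -> VT -> {set V}).
Hypothesis dtdT : is_dtd E ET r beta gamma.
Hypothesis width_lt : dtd_width ET beta gamma < k.

Local Notation Gamma := (Gamma ET beta gamma).

Definition bags_below u := \bigcup_(t in subarb ET u) beta t.

Lemma card_Gamma_le u : #|Gamma u| <= k.
Proof.
have := leq_bigmax (F := fun t => #|Gamma t|) u.
by move: width_lt; rewrite /dtd_width; lia.
Qed.

Lemma bag_sub_Gamma u : beta u \subset Gamma u.
Proof. by rewrite /Gamma -setUA subsetUl. Qed.

Lemma guard_sub_Gamma u c : ET u c -> gamma u c \subset Gamma u.
Proof. by move=> euc; apply: subset_trans (subsetUr _ _); exact: bigcup_sup. Qed.

Lemma bags_below_root : bags_below r = setT.
Proof.
case: dtdT => [[_ _ root_reach] bags_cover _].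
apply/setP => v; rewrite inE; have [t [vt _]] := bags_cover v.
by apply/bigcupP; exists t; rewrite ?inE ?root_reach.
Qed.

Lemma dtd_dicycle_separator (F : seq V -> Prop) :
  (forall s, F s -> dicycle E s) -> (exists s, F s) ->
  exists X G : {set V}, [/\ #|G| <= k, exists2 s, F s & {subset s <= X}
    & forall s, F s -> [disjoint s & G] -> [disjoint s & X]].
Proof.
case: dtdT => arbT _ guards F_dicycle [s0 Fs0].
pose P u := exists2 s, F s & {subset s <= bags_below u}.
have Pr : P r by exists s0 => // x _; rewrite bags_below_root inE.
have [u Pu deepest] := exists_deepest arbT Pr.
exists (bags_below u), (Gamma u); split=> //; first exact: card_Gamma_le.
move=> s Fs sG; rewrite disjoint_has; apply/hasPn => x xs.
apply/bigcupP => -[t]; rewrite inE => ut xt.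
have ut_neq : u != t.
  apply: contraTneq xt => <-; apply/negP => /(subsetP (bag_sub_Gamma u)).
  by rewrite (disjointFr sG xs).
have [c euc ct] := connect_first ut ut_neq.
apply: (deepest c euc); exists s => //.
apply: (strongly_guards_dicycle (guards _ _ euc) (F_dicycle _ Fs) _ xs).
  exact: disjointWr (guard_sub_Gamma euc) sG.
by apply/bigcupP; exists t; rewrite ?inE.
Qed.

Lemma dtd_erdos_posa (F : seq V -> Prop) t :
  (forall s, F s -> dicycle E s) ->
  (exists C : 'I_t -> seq V,
      (forall i, F (C i)) /\ (forall i j, i != j -> [disjoint C i & C j]))
  \/ (exists A : {set V}, #|A| <= k * (t - 1) /\
      forall s, F s -> ~~ [disjoint s & A]).
Proof.
elim: t F => [|t IHt] F F_dicycle.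
  by left; exists (fun _ => [::]); split=> -[].
have [F_ne | F_empty] := classic (exists s, F s); last first.
  by right; exists set0; rewrite cards0; split=> // s Fs; case: F_empty; exists s.
have [X [G [card_G [c0 Fc0 c0_in_X] G_sep]]] := dtd_dicycle_separator F_dicycle F_ne.
have c0_sub_X : c0 \subset X by apply/subsetP.
pose FX s := F s /\ [disjoint s & X].
have [[C [FXC C_disj]] | [A [card_A A_hits]]] :=
  IHt FX (fun s FXs => F_dicycle s FXs.1).
  left; apply: extend_disjoint_family C_disj Fc0 _ => [i | i]; first exact: (FXC i).1.
  exact: disjointWr c0_sub_X (FXC i).2.
case: t IHt card_A A_hits => [|t] _ card_A A_hits.
  left; exists (fun _ => c0); split=> // i j.
  by rewrite (ord1 i) (ord1 j) eqxx.
right; exists (A :|: G); split=> [|s Fs].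
  apply: leq_trans (leq_card_setU A G) _; move: card_A; rewrite !subSS subn0 mulnS.
  by move: card_G; lia.
apply/negP => sAG; have sX := G_sep s Fs (disjointWr (subsetUr A G) sAG).
by move: (A_hits s (conj Fs sX)); rewrite (disjointWr (subsetUl A G) sAG).
Qed.
End TreeDecomposition.

Theorem lemma3p1 (V : finType) (E : rel V) (k t : nat) :
  0 < k -> 0 < t -> dtw_lt E k ->
  (exists C : 'I_t -> seq V,
      (forall i, even_dicycle E (C i)) /\
      (forall i j, i != j -> [disjoint C i & C j]))
  \/
  (exists A : {set V}, #|A| <= k * (t - 1) /\
      ~ (exists s : seq V, even_dicycle (del_rel E A) s)).
Proof.
move=> _ _ [VT [ET [r [beta [gamma [dtdT width_lt]]]]]].
have [packing | [A [card_A A_hits]]] :=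
  dtd_erdos_posa dtdT width_lt t (fun s (s_even : even_dicycle E s) => s_even.1).
  by left.
right; exists A; split=> // -[s /even_dicycle_del_rel[s_even sA]].
by move: (A_hits s s_even); rewrite sA.
Qed.
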